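(* Let $n\ge1$. For every $f\in A_{\vec 0}(\mathbb{D}^n)$, every $\epsilon>0$ and every $\theta\in[0,2\pi)$, no non-zero positive measure in $A_{\vec 0}(\mathbb{D}^n)^\perp$ has support contained in $f^{-1}(H^\theta_\epsilon)=\{z\in\mathbb{T}^n: f(z)\in H^\theta_\epsilon\}$.
   Context: $A(\mathbb{D}^n)$ is the polydisc algebra (continuous on $\overline{\mathbb{D}}^n$, holomorphic on $\mathbb{D}^n$), regarded as a subspace of $C(\mathbb{T}^n)$; $A_{\vec 0}(\mathbb{D}^n)=\{z_1\cdots z_n g: g\in A(\mathbb{D}^n)\}$; $A_{\vec 0}(\mathbb{D}^n)^\perp$ is the set of complex Borel measures of bounded variation on $\mathbb{T}^n$ annihilating every function in $A_{\vec 0}(\mathbb{D}^n)$. $H^\theta_\epsilon=\{e^{i\theta}w: w\in\mathbb{C},\ \operatorname{Re}(w)\ge\epsilon\}$. *)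

From HB Require Import structures.
From mathcomp Require Import all_boot all_order all_algebra.
From mathcomp Require Import all_classical all_reals all_analysis.
From mathcomp Require Import complex.
Import Order.TTheory GRing.Theory Num.Theory.
Import numFieldNormedType.Exports numFieldTopology.Exports.

Set Implicit Arguments.
Unset Strict Implicit.
Unset Printing Implicit Defensive.

Local Open Scope classical_set_scope.
Local Open Scope ring_scope.

Definition CC (R : rcfType) : numClosedFieldType := R[i].

Section Polydisc.
Variables (R : realType) (n : nat).

(* C^n is 'rV[CC R]_n (coordinates z 0 j, j : 'I_n), with the product topology. *)
Definition Cn := 'rV[CC R]_n.

Definition open_polydisc : set Cn := [set z | forall j : 'I_n, `|z ord0 j| < 1].
Definition closed_polydisc : set Cn := [set z | forall j : 'I_n, `|z ord0 j| <= 1].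
Definition torus : set Cn := [set z | forall j : 'I_n, `|z ord0 j| = 1].

Definition upd (z : Cn) (j : 'I_n) (w : CC R) : Cn :=
  \row_(k < n) (if k == j then w else z ord0 k).

(* holomorphic on the open polydisc: (continuous and) complex differentiable
   in each variable separately (Rudin, Function theory in polydiscs; by
   Hartogs/Osgood this is the usual notion). *)
Definition holomorphic_on_polydisc (f : Cn -> CC R) : Prop :=
  forall z, open_polydisc z -> forall j : 'I_n,
    derivable (fun w : CC R => f (upd z j w)) (z ord0 j) 1.

Definition in_polydisc_algebra (f : Cn -> CC R) : Prop :=
  {within closed_polydisc, continuous f} /\ holomorphic_on_polydisc f.

Definition in_A0 (f : Cn -> CC R) : Prop :=
  exists g : Cn -> CC R, in_polydisc_algebra g /\
    forall z, closed_polydisc z -> f z = (\prod_(j < n) z ord0 j) * g z.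

Definition BorelCn := g_sigma_algebraType (@open Cn).

Definition msupport (mu : {measure set BorelCn -> \bar R}) : set Cn :=
  [set z | forall U : set Cn, open U -> U z -> (0 < mu U)%E].

Definition annihilates_A0 (mu : {measure set BorelCn -> \bar R}) : Prop :=
  forall g : Cn -> CC R, in_A0 g ->
    (\int[mu]_(x in (torus : set BorelCn)) (complex.Re (g x))%:E = 0)%E /\
    (\int[mu]_(x in (torus : set BorelCn)) (complex.Im (g x))%:E = 0)%E.

End Polydisc.

Definition Hhalf (R : realType) (theta eps : R) : set (CC R) :=
  [set u | exists w : CC R, eps <= complex.Re w /\
                             u = ((cos theta +i* sin theta)%C : CC R) * w].

From HB Require Import structures.
From mathcomp Require Import all_boot all_order all_algebra.
From mathcomp Require Import all_classical all_reals all_analysis.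
From mathcomp Require Import complex.
From mathcomp Require Import ring lra.
Import Order.TTheory GRing.Theory Num.Theory.
Import numFieldNormedType.Exports numFieldTopology.Exports.
Local Open Scope classical_set_scope.
Local Open Scope ring_scope.
Set Implicit Arguments.
Unset Strict Implicit.

(* Suppose mu is a non-zero finite positive measure annihilating
   A_0(D^n) whose support lies in f^{-1}(H^theta_eps).  Put
   k = e^{-i theta} / eps.  Then k f is again in A_0(D^n), so
   int_{T^n} Re (k f) dmu = 0, while Re (k f) >= 1 on the support of mu.
   Since C^n is second countable, the complement of the support is an open
   mu-null set, so the support carries the full mass of mu and
   0 = int Re (k f) dmu >= mu(supp mu) = mu(C^n) > 0, a contradiction.
   The integrand is not known to be measurable, so the lower bound is proved
   directly from the definition of the integral as a supremum over simple
   functions.  The argument does not use n >= 1,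
   the range of theta, finiteness of mu or its concentration on T^n. *)

Section IntegralLowerBound.
Local Open Scope ereal_scope.
Context d (T : measurableType d) (R : realType).
Variable mu : {measure set T -> \bar R}.
Import HBNNSimple.

(* A function that is nonnegative on D and vanishes on D outside a null set
   has integral zero; no measurability of f is needed. *)
Lemma integral_null_support (D N : set T) (f : T -> \bar R) :
  measurable N -> mu N = 0 ->
  (forall x, D x -> 0 <= f x) -> (forall x, D x -> ~ N x -> f x = 0) ->
  \int[mu]_(x in D) f x = 0.
Proof.
move=> mN N0 f0 fN; apply/eqP; rewrite eq_le integral_ge0 // andbT.
rewrite ge0_integralE //; apply: ge_ereal_sup => _ [h hf <-].
rewrite sintegralE fsbig1 // => r _.
have [->|r0] := eqVneq r 0%R; first by rewrite mul0e.
suff -> : mu (h @^-1` [set r]) = 0 by rewrite mule0.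
apply: (@subset_measure0 _ _ _ mu _ N _ mN _ N0).
  exact: measurable_funPTI.
move=> x /= hxr; apply: contrapT => Nx; move/eqP: r0; apply.
have := hf x; rewrite hxr patchE.
case: ifPn => [/set_mem Dx|_]; first rewrite fN //.
all: by rewrite lee_fin => r_le0; apply/eqP; rewrite eq_le r_le0 -hxr fun_ge0.
Qed.

(* If f >= 0 on D and f >= 1 on a measurable A contained in D, then the
   integral of f over D dominates mu A (compare with the simple function 1_A). *)
Lemma measure_le_integral (D A : set T) (f : T -> \bar R) : measurable A ->
  (forall x, D x -> 0 <= f x) -> (forall x, A x -> D x /\ 1 <= f x) ->
  mu A <= \int[mu]_(x in D) f x.
Proof.
move=> mA f0 Af; rewrite ge0_integralE //.
rewrite -sintegral_indic; apply: ereal_sup_ubound.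
exists (indic_nnsfun R mA) => // x /=; rewrite measurable_realfun.mindicE patchE.
case: (boolP (x \in A)) => [/set_mem /Af [Dx fx1]|_] /=.
  by rewrite mem_set.
by case: ifPn => // /set_mem /f0.
Qed.

(* A real function that is >= 1 on a measurable subset A of D of full measure
   has integral over D at least mu A: its negative part vanishes off the null
   set ~` A, and its positive part dominates 1_A. *)
Lemma integral_lower_bound (D A : set T) (g : T -> R) :
  measurable A -> mu (~` A) = 0 -> (forall x, A x -> D x /\ (1 <= g x)%R) ->
  mu A <= \int[mu]_(x in D) (g x)%:E.
Proof.
move=> mA A0 gA; rewrite integralE.
have -> : \int[mu]_(x in D) (fun y => (g y)%:E)^\- x = 0.
  apply: (integral_null_support (measurableC mA) A0) => [x _|x _ /contrapT].
    exact: funeneg_ge0.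
  move=> /gA [_ gx1]; rewrite funenegE; apply/max_idPr.
  by rewrite lee_fin oppr_le0 (le_trans _ gx1).
rewrite sube0; apply: measure_le_integral => // x /gA [Dx gx1].
by split => //; rewrite funeposE le_max lee_fin gx1.
Qed.
End IntegralLowerBound.

Lemma gaussian_rat_dense (R : realType) (x : CC R) (r : R) : 0 < r ->
  exists a b : rat, `|x - ((ratr a +i* ratr b)%C : CC R)| < r%:C%C.
Proof.
case: x => u v r0.
have [a] := @rat_in_itvoo R (u - r / 2) (u + r / 2) ltac:(lra).
have [b] := @rat_in_itvoo R (v - r / 2) (v + r / 2) ltac:(lra).
rewrite !in_itv /= => /andP[b1 b2] /andP[a1 a2]; exists a, b.
rewrite normc_def /= ltcR -(@ger0_norm _ r) ?ltW // -sqrtr_sqr.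
by rewrite ltr_sqrt ?exprn_gt0 //; nra.
Qed.

Section RationalPolydiscs.
Variables (R : realType) (n : nat).

Lemma open_polydisc_nbhs (U : set (Cn R n)) (x : Cn R n) : open U -> U x ->
  exists2 e : CC R, 0 < e &
    forall z : Cn R n, (forall j, `|x ord0 j - z ord0 j| < e) -> U z.
Proof.
move=> oU Ux; have /nbhs_ballP[e e0 eU] : nbhs x U by exact: open_nbhs_nbhs.
exists e => // z xz; apply: eU; split => // i j.
by rewrite (ord1 i) -ball_normE; exact: xz.
Qed.

Definition gaussian_rat (p : rat * rat) : CC R := (ratr p.1 +i* ratr p.2)%C.

(* The polydisc of rational radius r centred at the Gaussian-rational point q;
   they form a countable family. *)
Definition rat_polydisc (q : {ffun 'I_n -> rat * rat}) (r : rat) : set (Cn R n) :=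
  [set z | forall j, `|z ord0 j - gaussian_rat (q j)| < (ratr r : R)%:C%C].

Lemma rat_polydisc_basis (U : set (Cn R n)) (x : Cn R n) : open U -> U x ->
  exists q r, rat_polydisc q r x /\ rat_polydisc q r `<=` U.
Proof.
move=> oU Ux; have [[e1 e2] e0 eU] := open_polydisc_nbhs oU Ux.
move: e0; rewrite ltcE /= => /andP[/eqP e2_0 e1_0]; subst e2.
have [r] := @rat_in_itvoo R 0 (e1 / 2) ltac:(lra).
rewrite in_itv /= => /andP[r0 r1].
have /choice[c xc] : forall j : 'I_n,
    exists p, `|x ord0 j - gaussian_rat p| < (ratr r : R)%:C%C.
  by move=> j; have [a [b xab]] := gaussian_rat_dense (x ord0 j) r0; exists (a, b).
exists [ffun j => c j], r; split => [j|z zc]; first by rewrite ffunE.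
apply: eU => j; move: (zc j); rewrite ffunE => zcj.
rewrite (le_lt_trans (ler_distD (gaussian_rat (c j)) _ _)) //.
rewrite (distrC (gaussian_rat (c j))) (lt_le_trans (ltrD (xc j) zcj)) //.
by rewrite lecE /= addr0 eqxx /=; lra.
Qed.

End RationalPolydiscs.

Lemma open_measurable (R : realType) (n : nat) (U : set (Cn R n)) :
  open U -> measurable (U : set (BorelCn R n)).
Proof. exact: sub_sigma_algebra. Qed.

Section SupportComplement.
Local Open Scope ereal_scope.
Variables (R : realType) (n : nat) (mu : {measure set BorelCn R n -> \bar R}).

Definition open_null : set (set (Cn R n)) := [set U | open U /\ mu U = 0].

Lemma msupportC : ~` msupport mu = \bigcup_(U in open_null) U.
Proof.
apply/seteqP; split => [x xS|x [U [oU U0] Ux] xS].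
  apply: contrapT => xnU; apply: xS => U oU Ux.
  rewrite lt0e measure_ge0 andbT; apply/eqP => U0; apply: xnU; exists U => //.
by move: (xS U oU Ux); rewrite U0 ltxx.
Qed.

Lemma open_msupportC : open (~` msupport mu).
Proof. by rewrite msupportC; apply: bigcup_open => U []. Qed.

(* An open null set containing the rational polydisc i, if one exists. *)
Definition null_cover (i : {ffun 'I_n -> rat * rat} * rat) : set (Cn R n) :=
  xget set0 [set U | open_null U /\ @rat_polydisc R n i.1 i.2 `<=` U].

Lemma null_cover_open_null i : open_null (null_cover i).
Proof.
rewrite /null_cover; case: xgetP => [U -> [] //|_].
by split; [exact: open0|exact: measure0].
Qed.

(* By second countability, the union of all open null sets is a countable
   union, hence null: the complement of the support is mu-null. *)
Lemma msupportC_null : mu (~` msupport mu) = 0.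
Proof.
pose F k := if unpickle k is Some i then null_cover i else set0.
have F_null k : mu.-negligible (F k).
  rewrite /F; case: unpickle => [i|]; last exact: negligible_set0.
  have [oC C0] := null_cover_open_null i.
  by apply/negligibleP => //; exact: open_measurable.
apply/negligibleP; first exact: open_measurable open_msupportC.
apply: negligibleS (negligible_bigcup F_null).
rewrite msupportC => x [U [oU U0] Ux].
have [q [r [qrx qrU]]] := rat_polydisc_basis oU Ux.
exists (pickle (q, r)) => //.
rewrite /F pickleK /null_cover.
case: xgetP => [V -> [_ qrV]|noV]; first exact: qrV qrx.
by case: (noV U).
Qed.

Lemma measurable_msupport : measurable (msupport mu : set (BorelCn R n)).
Proof.
rewrite -[msupport mu]setCK; apply: measurableC.
exact: open_measurable open_msupportC.
Qed.

Lemma msupport_full : mu (msupport mu) = mu setT.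
Proof.
rewrite -(setUv (msupport mu)) measureU0 //.
- exact: measurable_msupport.
- exact: open_measurable open_msupportC.
- exact: msupportC_null.
Qed.

End SupportComplement.

Lemma in_A0Z (R : realType) (n : nat) (k : CC R) (f : Cn R n -> CC R) :
  in_A0 f -> in_A0 (fun z => k * f z).
Proof.
move=> [g [[g_cont g_hol] fg]]; exists (fun z => k * g z); split; last first.
  by move=> z z_cl; rewrite fg // mulrCA.
split=> [x|z z_op j]; last exact: derivableZ (g_hol z z_op j).
apply: (continuous_comp (g_cont x)); exact: mulrl_continuous.
Qed.

Lemma Hhalf_normalize (R : realType) (theta eps : R) (u : CC R) : 0 < eps ->
  Hhalf theta eps u ->
  1 <= complex.Re ((cos theta -i* sin theta)%C * (eps^-1)%:C%C * u).
Proof.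
move=> eps0 [[a b] /= [eps_a ->]] /=.
have cs1 := cos2Dsin2 theta; have epsV : eps * eps^-1 = 1 by rewrite mulfV ?gt_eqF.
have epsV0 : 0 < eps^-1 by rewrite invr_gt0.
set c := cos theta in cs1 *; set s := sin theta in cs1 *; set t := eps^-1 in epsV epsV0 *.
rewrite !(mulr0, mul0r, subr0, addr0, add0r, mulNr, mulrN, opprK).
have -> : c * t * (c * a - s * b) + s * t * (c * b + s * a) =
  t * a * (c ^+ 2 + s ^+ 2) by ring.
by rewrite cs1 mulr1; nra.
Qed.

Theorem mainTheorem6 (R : realType) (n : nat) (hn : (1 <= n)%N)
  (f : Cn R n -> CC R) (eps theta : R) :
  in_A0 f -> 0 < eps -> 0 <= theta < 2 * pi ->
  ~ exists mu : {measure set BorelCn R n -> \bar R},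
      (mu setT < +oo)%E /\ mu setT <> 0%E /\
      mu (~` @torus R n) = 0%E /\
      annihilates_A0 mu /\
      msupport mu `<=` [set z | @torus R n z /\ Hhalf theta eps (f z)].
Proof.
move=> f_A0 eps0 _ [mu [_ [mu_nz [_ [mu_ann mu_supp]]]]].
pose k : CC R := (cos theta -i* sin theta)%C * (eps^-1)%:C%C.
have [int_Re0 _] := mu_ann _ (in_A0Z k f_A0).
have : (mu (msupport mu) <= 0)%E.
  rewrite -int_Re0; apply: integral_lower_bound (measurable_msupport mu) _ _.
    exact: msupportC_null.
  by move=> z /mu_supp [z_T z_H]; split=> //; exact: Hhalf_normalize.
rewrite msupport_full => mu_le0.
by apply: mu_nz; apply/eqP; rewrite eq_le mu_le0 measure_ge0.
Qed.
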